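(* Let $G$ be a simple, undirected, unweighted, locally finite graph and $i\sim j$ an edge with $d_i\le d_j$. Then $\mathrm{Ric}(i,j)\ge\Phi(i,j)$, where $$\Phi(i,j)=-\Big(1-\frac1{d_i}-\frac1{d_j}-\frac{|\sharp_\Delta|}{d_j}\Big)_+-\Big(1-\frac1{d_i}-\frac1{d_j}-\frac{|\sharp_\Delta|}{d_i}\Big)_++\frac{|\sharp_\Delta|}{d_j}.$$
   Context: $x_+=\max\{x,0\}$. For an edge $i\sim j$ with degrees $d_i,d_j$ and neighbour sets $S_1(\cdot)$: $\sharp_\Delta=S_1(i)\cap S_1(j)$; $\sharp_\square^i=\{k\in S_1(i)\setminus (S_1(j)\cup\{j\}) : \exists\, w\in (S_1(k)\cap S_1(j))\setminus (S_1(i)\cup\{i\})\}$, $\sharp_\square^j$ symmetric; $\gamma_{\max}=\max\big\{\max_{k\in\sharp_\square^i}|(S_1(k)\cap S_1(j))\setminus(S_1(i)\cup\{i\})|,\ \max_{w\in\sharp_\square^j}|(S_1(w)\cap S_1(i))\setminus(S_1(j)\cup\{j\})|\big\}$. Balanced Forman curvature: $\mathrm{Ric}(i,j)=0$ if $\min\{d_i,d_j\}=1$, otherwise $\mathrm{Ric}(i,j)=\frac{2}{d_i}+\frac{2}{d_j}-2+\frac{2|\sharp_\Delta|}{\max\{d_i,d_j\}}+\frac{|\sharp_\Delta|}{\min\{d_i,d_j\}}+\frac{\gamma_{\max}^{-1}}{\max\{d_i,d_j\}}(|\sharp_\square^i|+|\sharp_\square^j|)$, the last term being $0$ when $\sharp_\square^i=\emptyset$.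 *)

From HB Require Import structures.
From mathcomp Require Import all_boot all_order all_algebra.
From mathcomp Require Import finmap.
Set Implicit Arguments. Unset Strict Implicit. Unset Printing Implicit Defensive.
Import Order.TTheory GRing.Theory Num.Theory.
Local Open Scope fset_scope.
Local Open Scope ring_scope.

(* A simple, undirected, unweighted, locally finite graph on an arbitrary
   (possibly infinite) vertex type V: each vertex x has a finite neighbour
   set S1 x; adjacency is symmetric and irreflexive. *)
Definition simple_lf_graph (V : choiceType) (S1 : V -> {fset V}) : Prop :=
  (forall x y : V, (y \in S1 x) = (x \in S1 y)) /\ (forall x : V, x \notin S1 x).

Section BFC.
Variables (V : choiceType) (S1 : V -> {fset V}).

Definition deg (x : V) : nat := #|` S1 x|.

Definition tri (i j : V) : {fset V} := S1 i `&` S1 j.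

Definition sqw (i j k : V) : {fset V} := (S1 k `&` S1 j) `\` (S1 i `|` [fset i]).

(* #_square^i ; #_square^j is sq j i *)
Definition sq (i j : V) : {fset V} :=
  [fset k in S1 i `\` (S1 j `|` [fset j]) | sqw i j k != fset0].

Definition gamma_max (i j : V) : nat :=
  maxn (\max_(k <- sq i j) #|` sqw i j k|) (\max_(w <- sq j i) #|` sqw j i w|).

Definition posp (R : realFieldType) (x : R) : R := Num.max x 0%R.

Definition Ric (R : realFieldType) (i j : V) : R :=
  let di := deg i in let dj := deg j in
  if minn di dj == 1%N then 0 else
  2 / di%:R + 2 / dj%:R - 2
  + 2 * (#|` tri i j|)%:R / (maxn di dj)%:R
  + (#|` tri i j|)%:R / (minn di dj)%:R
  + (if sq i j == fset0 then 0 else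
       ((gamma_max i j)%:R)^-1 / (maxn di dj)%:R
       * ((#|` sq i j|)%:R + (#|` sq j i|)%:R)).

Definition Phi (R : realFieldType) (i j : V) : R :=
  let di := (deg i)%:R in let dj := (deg j)%:R in
  let t := (#|` tri i j|)%:R in
  - posp (1 - 1 / di - 1 / dj - t / dj)
  - posp (1 - 1 / di - 1 / dj - t / di)
  + t / dj.

End BFC.

From HB Require Import structures.
From mathcomp Require Import all_boot all_order all_algebra.
From mathcomp Require Import finmap.
From mathcomp Require Import lra.
Set Implicit Arguments. Unset Strict Implicit.
Import Order.TTheory GRing.Theory Num.Theory.
Local Open Scope ring_scope.

(* Dropping the nonnegative 4-cycle term of Ric leaves
   2/d_i + 2/d_j - 2 + 2t/d_j + t/d_i, which is exactly Phi with both
   positive parts replaced by their arguments; since x <= x_+, Phi is below it.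
   When d_i = 1 the only neighbour of i is j, so there are no triangles and
   Phi <= t/d_j = 0 = Ric. *)

Lemma le_posp {R : realFieldType} (x : R) : x <= posp x.
Proof. by rewrite /posp le_max lexx. Qed.

Lemma posp_ge0 {R : realFieldType} (x : R) : 0 <= posp x.
Proof. by rewrite /posp le_max lexx orbT. Qed.

Section Curvature.
Variables (R : realFieldType) (V : choiceType) (S1 : V -> {fset V}).

Lemma card_tri_lt_deg (i j : V) :
  j \notin S1 j -> j \in S1 i -> (#|` tri S1 i j| < deg S1 i)%N.
Proof.
move=> jNj ji; rewrite /deg (cardfsD1 j (S1 i)) ji add1n ltnS.
apply: fsubset_leq_card; apply/fsubsetP => x; rewrite /tri !inE => /andP[xi xj].
by rewrite xi andbT; apply: contraNneq jNj => xj_eq; rewrite -{1}xj_eq.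
Qed.

Lemma Phi_le_tri (i j : V) :
  Phi S1 R i j <= (#|` tri S1 i j|)%:R / (deg S1 j)%:R.
Proof.
rewrite /Phi.
have := posp_ge0 (1 - 1 / (deg S1 i)%:R - 1 / (deg S1 j)%:R
                    - (#|` tri S1 i j|)%:R / (deg S1 j)%:R : R).
have := posp_ge0 (1 - 1 / (deg S1 i)%:R - 1 / (deg S1 j)%:R
                    - (#|` tri S1 i j|)%:R / (deg S1 i)%:R : R).
lra.
Qed.

Lemma Phi_le_tri_part (i j : V) :
  Phi S1 R i j <= 2 / (deg S1 i)%:R + 2 / (deg S1 j)%:R - 2
                  + 2 * (#|` tri S1 i j|)%:R / (deg S1 j)%:R
                  + (#|` tri S1 i j|)%:R / (deg S1 i)%:R.
Proof.
rewrite /Phi.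
have := le_posp (1 - 1 / (deg S1 i)%:R - 1 / (deg S1 j)%:R
                   - (#|` tri S1 i j|)%:R / (deg S1 j)%:R : R).
have := le_posp (1 - 1 / (deg S1 i)%:R - 1 / (deg S1 j)%:R
                   - (#|` tri S1 i j|)%:R / (deg S1 i)%:R : R).
lra.
Qed.

Lemma sq_term_ge0 (i j : V) :
  0 <= (if sq S1 i j == fset0 then 0 else
          ((gamma_max S1 i j)%:R)^-1 / (maxn (deg S1 i) (deg S1 j))%:R
          * ((#|` sq S1 i j|)%:R + (#|` sq S1 j i|)%:R) : R).
Proof.
by case: ifP => // _; rewrite !mulr_ge0 ?addr_ge0 ?invr_ge0 ?ler0n.
Qed.

End Curvature.

Theorem mainTheorem6 (R : realFieldType) (V : choiceType) (S1 : V -> {fset V})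
  (i j : V) :
  simple_lf_graph S1 ->
  j \in S1 i ->
  (deg S1 i <= deg S1 j)%N ->
  Phi S1 R i j <= Ric S1 R i j.
Proof.
move=> [_ irr] ji le_ij.
rewrite /Ric (minn_idPl le_ij) (maxn_idPr le_ij).
case: ifP => [/eqP di1 | _].
  have := card_tri_lt_deg (irr j) ji; rewrite di1 ltnS leqn0 => /eqP t0.
  by apply: le_trans (Phi_le_tri R S1 i j) _; rewrite t0 mul0r.
apply: le_trans (Phi_le_tri_part R S1 i j) _.
rewrite lerDl.
by have := sq_term_ge0 R S1 i j; rewrite (maxn_idPr le_ij).
Qed.
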